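(* Let $d\ge1$. There exists a constant $C_d>0$ such that for each $x\in\mathbb{R}^d$ there exists a family $(g_{1,x},g_{2,x},\dots,g_{d,x})\in(\mathcal{O}(\mathbb{Z}^d))^d$ with $g_{1,x}=\mathrm{Id}_{\mathbb{R}^d}$ such that the linear map $L_x:\mathbb{R}^d\to\mathbb{R}^d$ defined by $L_x(e_i)=g_{i,x}(x)$ for $i=1,\dots,d$ satisfies \[ \forall y\in\mathbb{R}^d\qquad C_d\|y\|_1\|x\|_1\le\|L_x(y)\|_1\le\|y\|_1\|x\|_1 . \] Moreover, if for each $n\in\mathcal{S}_2$ one sets $(n_1,n_2,\dots,n_d)=(n,g_{2,n}(n),\dots,g_{d,n}(n))$, then \[ \forall y\in\mathbb{R}^d\qquad \frac{C_d}{d^{3/2}}\|y\|_2\le\Big(\sum_{m=1}^d\langle y,n_m\rangle^2\Big)^{1/2}\le\sqrt d\,\|y\|_2 . \]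
   Context: $(e_1,\dots,e_d)$ is the canonical basis of $\mathbb{R}^d$, $\|x\|_1=\sum_i|x_i|$, $\|x\|_2$ is the Euclidean norm, and $\mathcal{S}_2=\{x\in\mathbb{R}^d:\|x\|_2=1\}$. For a permutation $\sigma$ of $\{1,\dots,d\}$ and $\epsilon\in\{-1,+1\}^d$, let $\Psi_{\sigma,\epsilon}(x)=\sum_{i=1}^d\epsilon(i)x_{\sigma(i)}e_i$; $\mathcal{O}(\mathbb{Z}^d)=\{\Psi_{\sigma,\epsilon}\}$ is the group of orthogonal transformations preserving the lattice $\mathbb{Z}^d$. *)

From mathcomp Require Import all_boot all_order all_algebra fingroup perm.
From mathcomp Require Import reals.
Set Implicit Arguments. Unset Strict Implicit. Unset Printing Implicit Defensive.
Import Order.TTheory GRing.Theory Num.Theory.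
Local Open Scope ring_scope.

Section Defs.
Variables (R : realType) (d : nat).

(* An element of O(Z^d) is encoded by a permutation sigma of 'I_d and a sign
   vector epsilon (true = -1, false = +1). *)
Definition OZd := ({perm 'I_d} * {ffun 'I_d -> bool})%type.

Definition Psi (g : OZd) (x : 'rV[R]_d) : 'rV[R]_d :=
  \row_i ((-1) ^+ (g.2 i) * x 0 (g.1 i)).

Definition l1norm (x : 'rV[R]_d) : R := \sum_i `|x 0 i|.
Definition dotp (x y : 'rV[R]_d) : R := \sum_i x 0 i * y 0 i.
Definition l2norm (x : 'rV[R]_d) : R := Num.sqrt (dotp x x).

Definition Lmap (gx : 'I_d -> OZd) (x y : 'rV[R]_d) : 'rV[R]_d :=
  \sum_i y 0 i *: Psi (gx i) x.

End Defs.

From mathcomp Require Import all_boot all_order all_algebra fingroup perm.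
From mathcomp Require Import reals.
From mathcomp Require Import zify ring lra.
Set Implicit Arguments. Unset Strict Implicit. Unset Printing Implicit Defensive.
Import Order.TTheory GRing.Theory Num.Theory.
Local Open Scope ring_scope.

(* Index the coordinates by Z/dZ through a permutation placing the largest
   |x_k| at 0 and the next ones at 1, -1, 2, -2, ...  Up to signs of its rows,
   L_x is then a signed circulant matrix with symbol a(m) = |x_(pi m)|, and for
   a signed rearrangement w of y
     <w, L_x y> = sum_m a(m) q_m(y),   q_m(y) = sum_i s_m(i) y_i y_(i+m),
   where q_0(y) = |y|_2^2 and q_(-m) = -q_m.  The signs s_m make the product of
   the -s_m(i) along every orbit of i |-> i + m equal to -1, so telescoping
   along an orbit gives q_m(y) >= (2 d^-3 - 1) |y|_2^2.  Abel summation over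
   a(0) >= a(1) >= a(-1) >= a(2) >= ... yields <w, L_x y> >= d^-3 |x|_oo |y|_2^2,
   and both estimates follow by comparing the l1, l2 and sup norms. *)

Section SumInequalities.
Variable R : realFieldType.

Lemma cauchy_schwarz (I : finType) (a b : I -> R) :
  (\sum_i a i * b i) ^+ 2 <= (\sum_i a i ^+ 2) * (\sum_i b i ^+ 2).
Proof.
have lagrange : 0 <= \sum_i \sum_j (a i * b j - a j * b i) ^+ 2.
  by apply: sumr_ge0 => i _; apply: sumr_ge0 => j _; apply: sqr_ge0.
set A := \sum_i a i ^+ 2; set B := \sum_i b i ^+ 2; set S := \sum_i a i * b i.
suff expand : \sum_i \sum_j (a i * b j - a j * b i) ^+ 2 = 2 * (A * B) - 2 * S ^+ 2.
  by rewrite expand in lagrange; lra.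
have AB1 : A * B = \sum_i \sum_j a i ^+ 2 * b j ^+ 2 by rewrite big_distrlr.
have AB2 : A * B = \sum_i \sum_j a j ^+ 2 * b i ^+ 2.
  by rewrite big_distrlr exchange_big.
have S2 : S ^+ 2 = \sum_i \sum_j (a i * b i) * (a j * b j).
  by rewrite expr2 big_distrlr.
rewrite (_ : 2 * (A * B) - 2 * S ^+ 2 = A * B + A * B - S ^+ 2 - S ^+ 2); last by ring.
rewrite {1}AB1 AB2 S2 -big_split /= -!sumrB; apply: eq_bigr => i _.
rewrite -big_split /= -!sumrB; apply: eq_bigr => j _; ring.
Qed.

Lemma ler_sum_term (I : finType) (F : I -> R) j :
  (forall i, 0 <= F i) -> F j <= \sum_i F i.
Proof. by move=> F_ge0; rewrite (bigD1 j) //= lerDl sumr_ge0. Qed.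

Lemma sqr_sum_le_card (I : finType) (f : I -> R) :
  (\sum_i f i) ^+ 2 <= #|I|%:R * \sum_i f i ^+ 2.
Proof.
have := cauchy_schwarz (fun=> 1) f.
by rewrite sumr_const expr1n; under eq_bigr do rewrite mul1r.
Qed.

Lemma abel_lower_bound (n : nat) (b e : nat -> R) (k : R) :
  (forall r, (r <= n)%N -> k <= \sum_(j < r.+1) e j) ->
  (forall r, (r < n)%N -> b r.+1 <= b r) -> 0 <= b n ->
  k * b 0%N <= \sum_(r < n.+1) b r * e r.
Proof.
move=> e_ge b_nonincr b_ge0.
suff abel M : (M <= n)%N ->
    k * (b 0%N - b M) <= \sum_(r < M.+1) b r * e r - b M * \sum_(j < M.+1) e j.
  by have := abel n (leqnn n); have := e_ge n (leqnn n); nra.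
elim: M => [|M IH] le_Mn; first by rewrite !big_ord1 subrr mulr0 subrr.
rewrite (big_ord_recr M.+1 (fun r => b r * e r)) (big_ord_recr M.+1 e) /=.
have := IH (ltnW le_Mn); have := e_ge M (ltnW le_Mn); have := b_nonincr M le_Mn.
set S := \sum_(r < M.+1) _; set E := \sum_(j < M.+1) _.
nra.
Qed.

Lemma mulr_sqr_le_cancel (c u v : R) :
  0 <= u -> 0 <= v -> c * u ^+ 2 <= u * v -> c * u <= v.
Proof.
move=> u_ge0 v_ge0; have [-> | u_neq0] := eqVneq u 0; first by rewrite mulr0.
have u_gt0 : 0 < u by rewrite lt_def u_neq0.
by rewrite expr2 mulrA -[u * v]mulrC ler_pM2r.
Qed.

End SumInequalities.

Section SqrtInequalities.
Variable R : rcfType.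

Lemma cauchy_schwarz_sqrt (I : finType) (a b : I -> R) :
  \sum_i a i * b i <= Num.sqrt (\sum_i a i ^+ 2) * Num.sqrt (\sum_i b i ^+ 2).
Proof.
rewrite -sqrtrM; last by apply: sumr_ge0 => i _; apply: sqr_ge0.
by rewrite (le_trans (ler_norm _)) // -sqrtr_sqr ler_wsqrtr // cauchy_schwarz.
Qed.

Lemma exp5_div_le (D : R) : 1 <= D -> D ^- 5 / (D * Num.sqrt D) <= D ^- 4.
Proof.
move=> D_ge1; have D_gt0 : 0 < D by lra.
have sqrtD_ge1 : 1 <= Num.sqrt D by rewrite -sqrtr1 ler_wsqrtr.
rewrite ler_pdivrMr ?mulr_gt0 ?sqrtr_gt0 //.
rewrite (_ : D ^- 4 * (D * Num.sqrt D) = D ^- 3 * Num.sqrt D); last by field; rewrite gt_eqF.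
rewrite (_ : D ^- 5 = D ^- 3 * D ^- 2); last by rewrite -invfM -exprD.
rewrite ler_wpM2l ?invr_ge0 ?exprn_ge0 ?(ltW D_gt0) //.
by apply: (le_trans _ sqrtD_ge1); rewrite invf_le1 ?exprn_gt0 ?exprn_ege1.
Qed.

End SqrtInequalities.

Section SignedCycles.
Variable R : realFieldType.

Lemma telescope_signed (z s : nat -> R) (L : nat) :
  \sum_(j < L) (\prod_(k < j) - s k) * (z j + s j * z j.+1)
  = z 0%N - (\prod_(k < L) - s k) * z L.
Proof.
elim: L => [|L IH]; first by rewrite !big_ord0 mul1r subrr.
by rewrite big_ord_recr /= IH big_ord_recr /=; ring.
Qed.

Variables (T : finType) (f : T -> T) (s y : T -> R).
Hypothesis s_sign : forall i, s i ^+ 2 = 1.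

Let energy := \sum_i (y i + s i * y (f i)) ^+ 2.

(* 2 y t is the sum of the increments along the orbit of t, weighted by the
   partial products of the -s; Cauchy-Schwarz bounds it. *)
Lemma neg_cycle_sqr_le (L : nat) (t : T) :
  iter L f t = t -> \prod_(k < L) - s (iter k f t) = -1 ->
  4 * y t ^+ 2 <= L%:R ^+ 2 * energy.
Proof.
move=> per neg.
pose v k := iter k f t.
pose inc j := y (v j) + s (v j) * y (v j.+1).
have two_y : 2 * y t = \sum_(j < L) (\prod_(k < j) - s (v k)) * inc j.
  by rewrite (telescope_signed (fun j => y (v j)) (fun j => s (v j))) neg /v per; ring.
have inc_le j : inc j ^+ 2 <= energy.
  exact: (ler_sum_term (F := fun i => (y i + s i * y (f i)) ^+ 2) (v j) (fun i => sqr_ge0 _)).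
have := sqr_sum_le_card (fun j : 'I_L => (\prod_(k < j) - s (v k)) * inc j).
rewrite -two_y card_ord.
have sign_sq (j : nat) : (\prod_(k < j) - s (v k)) ^+ 2 = 1.
  by rewrite -prodrXl big1 // => k _; rewrite sqrrN s_sign.
under eq_bigr => j _ do rewrite exprMn sign_sq mul1r.
have : \sum_(j < L) inc j ^+ 2 <= L%:R * energy.
  rewrite mulr_natl -[in X in _ <= X](card_ord L) -sumr_const.
  by apply: ler_sum => j _.
have : 0 <= L%:R :> R by [].
nra.
Qed.

Lemma neg_cycles_sum_sqr_le (L : nat) :
  (L <= #|T|)%N -> (forall t, iter L f t = t) ->
  (forall t, \prod_(k < L) - s (iter k f t) = -1) ->
  4 * \sum_i y i ^+ 2 <= #|T|%:R ^+ 3 * energy.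
Proof.
move=> le_LT per neg.
have energy_ge0 : 0 <= energy by apply: sumr_ge0 => i _; apply: sqr_ge0.
have le_L2 : L%:R ^+ 2 * energy <= #|T|%:R ^+ 2 * energy.
  by apply: ler_wpM2r => //; rewrite lerXn2r ?nnegrE ?ler_nat.
rewrite mulr_sumr (_ : _ ^+ 3 * energy = \sum_(t : T) #|T|%:R ^+ 2 * energy); last first.
  by rewrite sumr_const -mulr_natr; ring.
by apply: ler_sum => t _; apply: le_trans (neg_cycle_sqr_le (per t) (neg t)) le_L2.
Qed.

End SignedCycles.

Section ShiftOrbits.
Variable N : nat.
Local Notation d := N.+1.
Implicit Types (m t u : 'I_d).

Definition wraps m u : bool := (d <= u + m)%N.

Lemma val_addZp m u :
  val (u + m) = (if wraps m u then u + m - d else u + m)%N.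
Proof.
have lt_ud := ltn_ord u; have lt_md := ltn_ord m.
rewrite /wraps /=; case: ifP => wr; last by rewrite modn_small //; lia.
by rewrite -{1}(subnK wr) modnDr modn_small //; lia.
Qed.

Lemma orbit_val t m k :
  (val (iter k (+%R^~ m) t)
     + d * \sum_(j < k) wraps m (iter j (+%R^~ m) t) = t + k * m)%N.
Proof.
elim: k => [|k IH]; first by rewrite big_ord0 muln0 mul0n addn0.
rewrite (_ : iter k.+1 _ t = iter k (+%R^~ m) t + m) // val_addZp big_ord_recr /=.
have := ltn_ord (iter k (+%R^~ m) t); have := ltn_ord m.
move: IH; rewrite /wraps; set v := iter k _ t.
by case: (leqP d (v + m)) => /=; lia.
Qed.

Definition orbit_len m : nat := d %/ gcdn m d.

Lemma orbit_len_le m : (orbit_len m <= d)%N.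
Proof. exact: leq_div. Qed.

Lemma iter_orbit_len t m : iter (orbit_len m) (+%R^~ m) t = t.
Proof.
apply: val_inj; set v := iter _ _ t.
have := orbit_val t m (orbit_len m).
rewrite -/v [(orbit_len m * _)%N]mulnC muln_divCA_gcd !(mulnC d) => /(congr1 (modn^~ d)).
move=> E; rewrite -modnDmr modnMl addn0 -[X in _ = X]modnDmr modnMl addn0 in E.
by rewrite (modn_small (ltn_ord v)) (modn_small (ltn_ord t)) in E.
Qed.

Lemma orbit_wraps t m :
  (\sum_(j < orbit_len m) wraps m (iter j (+%R^~ m) t) = m %/ gcdn m d)%N.
Proof.
have := orbit_val t m (orbit_len m).
rewrite iter_orbit_len [(orbit_len m * _)%N]mulnC muln_divCA_gcd => /addnI /eqP.
by rewrite eqn_mul2l => /eqP.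
Qed.

Lemma odd_orbit_wraps m : ~~ odd (orbit_len m) -> odd (m %/ gcdn m d).
Proof.
move=> even_len; apply: contraT => even_wraps.
have gt0_g : (0 < gcdn m d)%N by rewrite gcdn_gt0 orbT.
have dvd2 k : (2 %| k %/ gcdn m d)%N -> (gcdn m d %| k)%N -> (2 * gcdn m d %| k)%N.
  by move=> dvd2k dvdgk; rewrite -(divnK dvdgk) dvdn_pmul2r.
have : (2 * gcdn m d %| gcdn m d)%N.
  by rewrite dvdn_gcd dvd2 ?dvdn2 ?dvdn_gcdl // dvd2 ?dvdn2 ?dvdn_gcdr.
by move/(dvdn_leq gt0_g); lia.
Qed.

Definition base_sign m u : bool := wraps m u && ~~ odd (orbit_len m).

(* For 2 m > d the signs of -m are reflected, so that q_(-m) = -q_m. *)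
Definition shift_sign m u : bool :=
  if (d < 2 * m)%N then ~~ base_sign (- m) (u + m) else base_sign m u.

End ShiftOrbits.

Section Zigzag.
Variable N : nat.
Local Notation d := N.+1.

Definition zigzag (r : nat) : 'I_d := if odd r then inord r.+1./2 else - inord r./2.

Lemma zigzag0 : zigzag 0 = 0.
Proof. by rewrite /zigzag /=; apply: val_inj; rewrite /= inordK // subn0 modnn. Qed.

Lemma zigzagS r : odd r -> zigzag r.+1 = - zigzag r.
Proof. by rewrite /zigzag /= => ->. Qed.

Lemma val_zigzag r : (r < d)%N ->
  val (zigzag r) = (if odd r then (r./2).+1 else if r == 0 then 0 else d - r./2)%N.
Proof.
move=> lt_rd; have := odd_double_half r; rewrite /zigzag -muln2.
case: (boolP (odd r)) => [odd_r | even_r] /= r_eq.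
  by rewrite uphalf_half odd_r inordK; lia.
rewrite inordK; last lia.
case: eqP => [r0 | /eqP r_neq0]; first by rewrite r0 subn0 modnn.
by rewrite modn_small; lia.
Qed.

Lemma zigzag_inj : injective (fun r : 'I_d => zigzag r).
Proof.
move=> r1 r2 /(congr1 val); rewrite !val_zigzag // => eq_val; apply: val_inj => /=.
have := odd_double_half r1; have := odd_double_half r2; rewrite -!muln2.
have := ltn_ord r1; have := ltn_ord r2.
by move: eq_val; case: (odd r1); case: (odd r2);
  case: (nat_of_ord r1 =P 0%N); case: (nat_of_ord r2 =P 0%N) => /=; lia.
Qed.

Definition zigzag_perm : {perm 'I_d} := perm zigzag_inj.

Lemma zigzag_permE (r : 'I_d) : zigzag_perm r = zigzag r.
Proof. exact: permE. Qed.

End Zigzag.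

Section ShiftForms.
Variables (R : realFieldType) (N : nat).
Local Notation d := N.+1.
Implicit Types (m t : 'I_d) (y : 'I_d -> R).

Lemma prod_neg_signs (L : nat) (b : nat -> bool) :
  \prod_(k < L) - (-1) ^+ b k = (-1) ^+ (L + \sum_(k < L) b k)%N :> R.
Proof.
elim: L => [|L IH]; first by rewrite !big_ord0.
by rewrite big_ord_recr /= IH big_ord_recr /= !exprD exprS; ring.
Qed.

(* If the orbit has odd length no sign is flipped; otherwise the number of
   wraps around Z/dZ, which is odd, is flipped. *)
Lemma orbit_sign_prod t m :
  \prod_(k < orbit_len m) - (-1) ^+ base_sign m (iter k (+%R^~ m) t) = -1 :> R.
Proof.
rewrite (prod_neg_signs _ (fun k => base_sign m (iter k _ t))) -signr_odd.
suff -> : odd (orbit_len m + \sum_(k < orbit_len m) base_sign m (iter k (+%R^~ m) t))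
  by rewrite expr1.
rewrite /base_sign; case: (boolP (odd (orbit_len m))) => [odd_len | even_len].
  by rewrite big1 ?addn0 // => k _; rewrite andbF.
under eq_bigr do rewrite andbT.
by rewrite orbit_wraps oddD (negbTE even_len) odd_orbit_wraps.
Qed.

Definition shift_form m y : R :=
  \sum_i (-1) ^+ shift_sign m i * (y i * y (i + m)).

Lemma shift_form0 y : shift_form 0 y = \sum_i y i ^+ 2.
Proof.
apply: eq_bigr => i _.
by rewrite /shift_sign /base_sign /wraps /= addn0 addr0 leqNgt ltn_ord mul1r expr2.
Qed.

Lemma shift_form_ge m y : (2 * m <= d)%N ->
  (2 * d%:R ^- 3 - 1) * \sum_i y i ^+ 2 <= shift_form m y.
Proof.
move=> le_2m_d; set s := fun u => (-1) ^+ base_sign m u : R.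
have -> : shift_form m y = \sum_i s i * (y i * y (i + m)).
  by apply: eq_bigr => i _; rewrite /shift_sign ltnNge le_2m_d.
have := neg_cycles_sum_sqr_le (f := +%R^~ m) (s := s) y (fun i => sqrr_sign _ _)
  (leq_trans (orbit_len_le m) (eq_leq (esym (card_ord d)))) (fun t => iter_orbit_len t m)
  (fun t => orbit_sign_prod t m).
have -> : \sum_i (y i + s i * y (i + m)) ^+ 2
    = 2 * \sum_i y i ^+ 2 + 2 * \sum_i s i * (y i * y (i + m)).
  have shift_sum : \sum_i y (i + m) ^+ 2 = \sum_i y i ^+ 2.
    by rewrite [RHS](reindex_inj (addIr m)).
  transitivity (\sum_i y i ^+ 2 + \sum_i y (i + m) ^+ 2
                + 2 * \sum_i s i * (y i * y (i + m))); last by rewrite shift_sum; ring.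
  rewrite mulr_sumr -!big_split /=.
  by apply: eq_bigr => i _; rewrite sqrrD exprMn sqrr_sign; ring.
rewrite card_ord; have c_gt0 : 0 < d%:R ^+ 3 :> R by rewrite exprn_gt0.
set Y := \sum_i _; set Q := \sum_i _ => bound.
have -> : (2 * d%:R ^- 3 - 1) * Y = (2 * Y - d%:R ^+ 3 * Y) / d%:R ^+ 3.
  by field; rewrite nat1r pnatr_eq0.
by rewrite ler_pdivrMr //; lra.
Qed.

Lemma shift_formN m y : (0 < m)%N -> (2 * m < d)%N ->
  shift_form (- m) y = - shift_form m y.
Proof.
move=> m_gt0 lt_2m_d.
have lt_d_2Nm : (d < 2 * val (- m))%N by rewrite /= modn_small; lia.
rewrite /shift_form /shift_sign lt_d_2Nm ltnNge (ltnW lt_2m_d) opprK /=.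
rewrite (reindex_inj (addIr m)) /= -sumrN; apply: eq_bigr => j _.
by rewrite addrK signrN mulNr (mulrC (y (j + m))).
Qed.


Lemma zigzag_partial_sum y r : (r < d)%N ->
  \sum_(j < r.+1) shift_form (zigzag N j) y
    = \sum_i y i ^+ 2 + (if odd r then shift_form (zigzag N r) y else 0).
Proof.
elim: r => [_ | r IH lt_r1_d]; first by rewrite big_ord1 zigzag0 shift_form0 addr0.
rewrite big_ord_recr /= IH ?(ltnW lt_r1_d) //.
case: (boolP (odd r)) => [odd_r | even_r] /=; last by rewrite addr0.
have := val_zigzag (ltnW lt_r1_d); rewrite odd_r => val_z.
have := odd_double_half r; rewrite odd_r -muln2 => r_eq.
by rewrite zigzagS // shift_formN ?val_z ?addrK ?addr0 //; lia.
Qed.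

Lemma zigzag_form_ge y r : odd r -> (r < d)%N ->
  (2 * d%:R ^- 3 - 1) * \sum_i y i ^+ 2 <= shift_form (zigzag N r) y.
Proof.
move=> odd_r lt_rd; apply: shift_form_ge.
have := odd_double_half r; rewrite (val_zigzag lt_rd) odd_r -muln2; lia.
Qed.

Lemma zigzag_weighted_sum_ge (b : nat -> R) y :
  (forall r, (r < N)%N -> b r.+1 <= b r) -> 0 <= b N ->
  d%:R ^- 3 * b 0%N * \sum_i y i ^+ 2 <= \sum_(r < d) b r * shift_form (zigzag N r) y.
Proof.
move=> b_nonincr b_ge0; rewrite mulrAC.
apply: (abel_lower_bound (e := fun r => shift_form (zigzag N r) y)) => // r le_rN.
rewrite zigzag_partial_sum //.
have Y_ge0 : 0 <= \sum_i y i ^+ 2 by apply: sumr_ge0 => i _; apply: sqr_ge0.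
have k_gt0 : 0 < d%:R ^- 3 :> R by rewrite invr_gt0 exprn_gt0.
have k_le1 : d%:R ^- 3 <= 1 :> R.
  by rewrite invf_le1 ?exprn_gt0 // exprn_ege1 // ler1n.
case: (boolP (odd r)) => [odd_r | _]; last by rewrite addr0 ler_piMl.
have := zigzag_form_ge y odd_r le_rN; set k := d%:R ^- 3; set Y := \sum_i _.
have : 0 <= k * Y by rewrite mulr_ge0 // ltW.
nra.
Qed.

End ShiftForms.

Section SortPerm.
Variables (disp : Order.disp_t) (T : orderType disp) (n : nat) (f : 'I_n.+1 -> T).

Definition sort_desc : seq 'I_n.+1 := sort (fun i j => f j <= f i)%O (enum 'I_n.+1).

Lemma size_sort_desc : size sort_desc = n.+1.
Proof. by rewrite size_sort size_enum_ord. Qed.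

Lemma sort_perm_inj : injective (fun r : 'I_n.+1 => nth ord0 sort_desc r).
Proof.
move=> r1 r2 /eqP; rewrite nth_uniq ?size_sort_desc ?sort_uniq ?enum_uniq //.
by move/eqP/val_inj.
Qed.

Definition sort_perm : {perm 'I_n.+1} := perm sort_perm_inj.

Lemma sort_perm_nonincr (r1 r2 : 'I_n.+1) :
  (r1 <= r2)%N -> (f (sort_perm r2) <= f (sort_perm r1))%O.
Proof.
move=> le_r12; rewrite !permE.
have ge_trans : transitive (fun i j => f j <= f i)%O.
  by move=> j i k /= le_ji le_kj; apply: le_trans le_kj le_ji.
apply: (sorted_leq_nth ge_trans) => //; rewrite ?inE ?size_sort_desc //.
by apply: sort_sorted => i j; apply: le_total.
Qed.

Lemma sort_perm_max k : (f k <= f (sort_perm ord0))%O.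
Proof.
by rewrite -[k](permKV sort_perm) sort_perm_nonincr.
Qed.

End SortPerm.

Section Frame.
Variables (R : realType) (N : nat) (x : 'rV[R]_N.+1).
Local Notation d := N.+1.

Definition imax : 'I_d := sort_perm (fun k => `|x 0 k|) ord0.

Lemma abs_le_imax k : `|x 0 k| <= `|x 0 imax|.
Proof. exact: (sort_perm_max (fun k => `|x 0 k|)). Qed.

(* Since (s * t) k = t (s k), position zigzag r receives the index of the
   r-th largest |x 0 k|. *)
Definition coord_perm : {perm 'I_d} :=
  ((zigzag_perm N)^-1 * sort_perm (fun k => `|x 0 k|))%g.

Local Notation pinv := (coord_perm^-1)%g.

Lemma coord_perm_zigzag (r : 'I_d) :
  coord_perm (zigzag N r) = sort_perm (fun k => `|x 0 k|) r.
Proof. by rewrite permM -zigzag_permE permK. Qed.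

Definition xneg k : bool := x 0 k < 0.

Lemma sign_xneg k : (-1) ^+ xneg k * x 0 k = `|x 0 k|.
Proof.
rewrite /xneg; case: ltrP => [x_lt0 | x_ge0]; last by rewrite mul1r ger0_norm.
by rewrite mulN1r ltr0_norm.
Qed.

(* Row k of L_x carries the extra sign (-1) ^+ gauge k, chosen so that frame 0
   is the identity; the test vector Psi gauge_op y carries it too. *)
Definition gauge k : bool := shift_sign (pinv k) 0 (+) xneg k.

Definition gauge_op : OZd d := (pinv, [ffun k => gauge k]).

Lemma frame_perm_inj i : injective (fun k => coord_perm (pinv k - i)).
Proof. by move=> k1 k2 /perm_inj /addIr /perm_inj. Qed.

Definition frame_perm i : {perm 'I_d} := perm (@frame_perm_inj i).

Lemma frame_permE i k : frame_perm i k = coord_perm (pinv k - i).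
Proof. exact: permE. Qed.

Definition frame_sign i : {ffun 'I_d -> bool} :=
  [ffun k => gauge k (+) shift_sign (pinv k - i) i (+) xneg (frame_perm i k)].

Definition frame i : OZd d := (frame_perm i, frame_sign i).

Lemma frame0 (z : 'rV[R]_d) : Psi (frame 0) z = z.
Proof.
apply/rowP => k; rewrite mxE /= ffunE frame_permE subr0 permKV /gauge.
by case: (shift_sign _ _); case: (xneg k); rewrite /= mul1r.
Qed.

Lemma dotp_gauge_frame (y : 'rV[R]_d) i :
  dotp (Psi gauge_op y) (Psi (frame i) x)
  = \sum_m (-1) ^+ shift_sign m i * `|x 0 (coord_perm m)| * y 0 (m + i).
Proof.
rewrite /dotp (reindex_inj (@perm_inj _ coord_perm)) /=.
rewrite [RHS](reindex_inj (addIr (- i))) /=; apply: eq_bigr => r _.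
rewrite !mxE /= !ffunE frame_permE !permK subrK -sign_xneg /gauge !signr_addb permK.
move: (x 0 _) (y 0 r) => a b.
(* the two signs of row coord_perm r occur twice and cancel *)
have sq_sign (c : bool) : (-1) ^+ c * (-1) ^+ c = 1 :> R by rewrite -expr2 sqrr_sign.
move: (sq_sign (shift_sign r 0)) (sq_sign (xneg (coord_perm r))).
move: ((-1) ^+ _) ((-1) ^+ _) ((-1) ^+ _) ((-1) ^+ _) => e c q p pp qq.
transitivity (p * p * (q * q) * (c * (e * a) * b)); first ring.
by rewrite pp qq !mul1r.
Qed.

Lemma sum_dotp_gauge_frame (y : 'rV[R]_d) :
  \sum_i y 0 i * dotp (Psi gauge_op y) (Psi (frame i) x)
  = \sum_m `|x 0 (coord_perm m)| * shift_form m (fun i => y 0 i).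
Proof.
under eq_bigr => i _ do rewrite dotp_gauge_frame mulr_sumr.
rewrite exchange_big /=; apply: eq_bigr => m _.
rewrite /shift_form mulr_sumr; apply: eq_bigr => i _.
by rewrite (addrC m i); ring.
Qed.

Lemma gauge_frame_ge (y : 'rV[R]_d) :
  d%:R ^- 3 * `|x 0 imax| * \sum_i y 0 i ^+ 2
  <= \sum_i y 0 i * dotp (Psi gauge_op y) (Psi (frame i) x).
Proof.
pose b r := `|x 0 (sort_perm (fun k => `|x 0 k|) (inord r))|.
have -> : `|x 0 imax| = b 0%N.
  by rewrite /b /imax; congr `|x 0 (sort_perm _ _)|; apply: val_inj; rewrite /= inordK.
have -> : \sum_i y 0 i * dotp (Psi gauge_op y) (Psi (frame i) x)
    = \sum_(r < d) b r * shift_form (zigzag N r) (fun i => y 0 i).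
  rewrite sum_dotp_gauge_frame (reindex_inj (@perm_inj _ (zigzag_perm N))) /=.
  by apply: eq_bigr => r _; rewrite zigzag_permE coord_perm_zigzag /b inord_val.
apply: (@zigzag_weighted_sum_ge _ N b (fun i => y 0 i)) => [r lt_rN |]; last exact: normr_ge0.
by apply: (sort_perm_nonincr (fun k => `|x 0 k|)); rewrite !inordK //; lia.
Qed.

End Frame.

Section Norms.
Variables (R : realType) (N : nat).
Local Notation d := N.+1.
Implicit Types (v w x y : 'rV[R]_d) (g : OZd d).

Lemma dotp_sqr v : dotp v v = \sum_i v 0 i ^+ 2.
Proof. by apply: eq_bigr => i _; rewrite expr2. Qed.

Lemma dotp_self_ge0 v : 0 <= dotp v v.
Proof. by rewrite dotp_sqr; apply: sumr_ge0 => i _; apply: sqr_ge0. Qed.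

Lemma dotp_unit v : l2norm v = 1 -> dotp v v = 1.
Proof.
by move=> v1; rewrite -[dotp v v]sqr_sqrtr ?dotp_self_ge0 // -/(l2norm v) v1 expr1n.
Qed.

Lemma l1norm_ge0 v : 0 <= l1norm v.
Proof. exact: sumr_ge0. Qed.

Lemma abs_le_l1norm v k : `|v 0 k| <= l1norm v.
Proof. exact: (ler_sum_term (F := fun i => `|v 0 i|)). Qed.

Lemma l1norm_Psi g v : l1norm (Psi g v) = l1norm v.
Proof.
rewrite /l1norm [RHS](reindex_inj (@perm_inj _ g.1)).
by apply: eq_bigr => k _; rewrite mxE normrM normr_sign mul1r.
Qed.

Lemma dotp_Psi g v : dotp (Psi g v) (Psi g v) = dotp v v.
Proof.
rewrite !dotp_sqr [RHS](reindex_inj (@perm_inj _ g.1)).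
by apply: eq_bigr => k _; rewrite mxE exprMn sqrr_sign mul1r.
Qed.

Lemma Psi_onto g y : exists z, Psi g z = y.
Proof.
exists (\row_j ((-1) ^+ g.2 (g.1^-1 j)%g * y 0 (g.1^-1 j)%g)).
by apply/rowP => k; rewrite !mxE permK mulrA -expr2 sqrr_sign mul1r.
Qed.

Lemma sqr_l1norm_le v : l1norm v ^+ 2 <= d%:R * dotp v v.
Proof.
rewrite dotp_sqr -[d in d%:R](card_ord d).
under [X in _ <= _ * X]eq_bigr => i _ do rewrite -real_normK ?num_real //.
exact: sqr_sum_le_card.
Qed.

Lemma l1norm_le_imax x : l1norm x <= d%:R * `|x 0 (imax x)|.
Proof.
rewrite -[d in d%:R](card_ord d) mulr_natl -sumr_const.
by apply: ler_sum => k _; apply: abs_le_imax.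
Qed.

Lemma dim_imax_ge1 v : dotp v v = 1 -> 1 <= d%:R * `|v 0 (imax v)|.
Proof.
move=> vv1; have A_le1 : `|v 0 (imax v)| <= 1.
  rewrite -ler_sqr ?nnegrE // expr1n -vv1 dotp_sqr real_normK ?num_real //.
  exact: (ler_sum_term (F := fun i => v 0 i ^+ 2) _ (fun i => sqr_ge0 _)).
have : dotp v v <= d%:R * `|v 0 (imax v)| ^+ 2.
  rewrite dotp_sqr -[d in d%:R](card_ord d) mulr_natl -sumr_const.
  by apply: ler_sum => k _; rewrite -real_normK ?num_real // ler_sqr ?nnegrE ?abs_le_imax.
by rewrite vv1 => /le_trans; apply; rewrite ler_wpM2l // expr2 ler_piMr.
Qed.

Lemma dotp_le_l1norm w v (B : R) :
  (forall k, `|w 0 k| <= B) -> dotp w v <= B * l1norm v.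
Proof.
move=> w_le; rewrite /dotp /l1norm mulr_sumr; apply: ler_sum => k _.
by rewrite (le_trans (ler_norm _)) // normrM ler_wpM2r.
Qed.

Lemma dotp_Lmap (gx : 'I_d -> OZd d) x y w :
  dotp w (Lmap gx x y) = \sum_i y 0 i * dotp w (Psi (gx i) x).
Proof.
rewrite /dotp /Lmap; under eq_bigr => k _ do rewrite summxE mulr_sumr.
rewrite exchange_big /=; apply: eq_bigr => i _; rewrite mulr_sumr.
by apply: eq_bigr => k _; rewrite mxE; ring.
Qed.

Lemma l1norm_Lmap_le (gx : 'I_d -> OZd d) x y :
  l1norm (Lmap gx x y) <= l1norm y * l1norm x.
Proof.
rewrite /Lmap /l1norm; under eq_bigr => k _ do rewrite summxE.
apply: (@le_trans _ _ (\sum_k \sum_i `|y 0 i| * `|Psi (gx i) x 0 k|)).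
  apply: ler_sum => k _; apply: (le_trans (ler_norm_sum _ _ _)).
  by apply: ler_sum => i _; rewrite mxE normrM.
rewrite exchange_big mulr_suml; apply: ler_sum => i _.
by rewrite -mulr_sumr -/(l1norm (Psi (gx i) x)) l1norm_Psi.
Qed.

Lemma Lmap_frame_l1_ge x y :
  d%:R ^- 5 * l1norm y * l1norm x <= l1norm (Lmap (frame x) x y).
Proof.
set Y1 := l1norm y; set X1 := l1norm x; set Z := l1norm (Lmap _ x y).
set w := Psi (gauge_op x) y; set A := `|x 0 (imax x)|.
have key := gauge_frame_ge x y; rewrite -dotp_Lmap -dotp_sqr in key.
have w_le : dotp w (Lmap (frame x) x y) <= Y1 * Z.
  by apply: dotp_le_l1norm => k; rewrite /Y1 -(l1norm_Psi (gauge_op x)) abs_le_l1norm.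
have le_X1 : X1 <= d%:R * A := l1norm_le_imax x.
have le_Y1 : Y1 ^+ 2 <= d%:R * dotp y y := sqr_l1norm_le y.
suff : d%:R ^- 5 * X1 * Y1 ^+ 2 <= Y1 * Z.
  by move=> h; rewrite mulrAC; apply: mulr_sqr_le_cancel h; rewrite ?l1norm_ge0.
apply: le_trans (le_trans key w_le).
have -> : d%:R ^- 3 * A * dotp y y = d%:R ^- 5 * (d%:R * A) * (d%:R * dotp y y).
  by field; rewrite nat1r pnatr_eq0.
rewrite ler_pM ?mulr_ge0 ?l1norm_ge0 ?sqr_ge0 ?invr_ge0 ?exprn_ge0 //.
by rewrite ler_wpM2l ?invr_ge0 ?exprn_ge0.
Qed.

Lemma frame_l2_le n y : l2norm n = 1 ->
  Num.sqrt (\sum_(m < d) (dotp y (Psi (frame n m) n)) ^+ 2) <= Num.sqrt d%:R * l2norm y.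
Proof.
move=> /dotp_unit nn1.
rewrite /l2norm -sqrtrM // ler_wsqrtr // -[d in d%:R](card_ord d) mulr_natl -sumr_const.
apply: ler_sum => m _; apply: le_trans (cauchy_schwarz _ _) _.
by rewrite -!dotp_sqr dotp_Psi nn1 mulr1.
Qed.

Lemma frame_l2_ge n y : l2norm n = 1 ->
  d%:R ^- 4 * l2norm y <= Num.sqrt (\sum_(m < d) (dotp y (Psi (frame n m) n)) ^+ 2).
Proof.
move=> /dotp_unit nn1.
have [z Psi_z] := Psi_onto (gauge_op n) y.
have key := gauge_frame_ge n z; rewrite Psi_z in key.
have zz : \sum_i z 0 i ^+ 2 = l2norm y ^+ 2.
  by rewrite -dotp_sqr -(dotp_Psi (gauge_op n)) Psi_z sqr_sqrtr ?dotp_self_ge0.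
have := cauchy_schwarz_sqrt (fun i => z 0 i) (fun i => dotp y (Psi (frame n i) n)).
rewrite zz sqrtr_sqr ger0_norm ?sqrtr_ge0 // => CS.
apply: mulr_sqr_le_cancel; rewrite ?sqrtr_ge0 //.
apply: le_trans (le_trans key CS); rewrite -zz -mulrA.
rewrite (_ : d%:R ^- 4 = d%:R ^- 3 * d%:R^-1); last by field; rewrite nat1r pnatr_eq0.
rewrite -mulrA ler_wpM2l ?invr_ge0 ?exprn_ge0 // ler_wpM2r ?sumr_ge0 //.
  by move=> i _; apply: sqr_ge0.
by rewrite -[d%:R^-1]mulr1 ler_pdivrMl // dim_imax_ge1.
Qed.

End Norms.

Theorem lemma2p2 (R : realType) (d : nat) (hd : (0 < d)%N) :
  exists C : R, 0 < C /\
  exists g : 'rV[R]_d -> 'I_d -> OZd d,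
    (forall (x : 'rV[R]_d) (i : 'I_d), nat_of_ord i = 0%N ->
       forall z : 'rV[R]_d, Psi (g x i) z = z) /\
    (forall x y : 'rV[R]_d,
       C * l1norm y * l1norm x <= l1norm (Lmap (g x) x y) /\
       l1norm (Lmap (g x) x y) <= l1norm y * l1norm x) /\
    (forall n : 'rV[R]_d, l2norm n = 1 ->
       forall y : 'rV[R]_d,
         C / (d%:R * Num.sqrt d%:R) * l2norm y
           <= Num.sqrt (\sum_(m < d) (dotp y (Psi (g n m) n)) ^+ 2) /\
         Num.sqrt (\sum_(m < d) (dotp y (Psi (g n m) n)) ^+ 2)
           <= Num.sqrt d%:R * l2norm y).
Proof.
case: d hd => [//|N] _.
exists (N.+1%:R ^- 5); split; first by rewrite invr_gt0 exprn_gt0.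
exists (@frame R N); split.
  by move=> x i i0 z; rewrite (_ : i = 0) ?frame0 //; apply: val_inj.
split=> [x y | n n1 y]; first by split; [apply: Lmap_frame_l1_ge | apply: l1norm_Lmap_le].
split; last exact: frame_l2_le.
apply: le_trans (frame_l2_ge y n1); rewrite ler_wpM2r ?sqrtr_ge0 //.
by rewrite exp5_div_le // ler1n.
Qed.
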